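(* Let $\varphi=\frac{1+\sqrt5}{2}$. Let $z\in\{0,1\}^*$, $n=[z]_F$ and $n'=[z0]_F$, and suppose $n\geq 1$ and ${\bf f}[n]=a$. Then $\lceil n/\varphi^2\rceil=\lceil n'/\varphi^3\rceil$.
   Context: Fibonacci numbers: $F_0=0$, $F_1=1$, $F_{m+2}=F_{m+1}+F_m$. For a binary word $k_m\cdots k_0$, $[k_m\cdots k_0]_F=\sum_{i=0}^m k_iF_{i+2}$. Standard Fibonacci words: $f_{-1}=b$, $f_0=a$, $f_{m+1}=f_mf_{m-1}$; the Fibonacci word ${\bf f}=\lim f_m=abaababaab\cdots$ is indexed from ${\bf f}[1]=a$. *)

From mathcomp Require Import all_boot all_order all_algebra.
From mathcomp Require Import reals.
Set Implicit Arguments. Unset Strict Implicit. Unset Printing Implicit Defensive.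
Import Order.TTheory GRing.Theory Num.Theory.

Fixpoint fib (m : nat) : nat :=
  match m with
  | 0 => 0
  | 1 => 1
  | (m'.+1 as k).+1 => fib k + fib m'
  end.

(* A binary word z = k_m ... k_0 is a seq bool written in reading order
   (most significant letter k_m first, k_0 last).
   [k_m ... k_0]_F = \sum_i k_i F_{i+2}. *)
Definition evalF (z : seq bool) : nat :=
  \sum_(i < size z) (nth false (rev z) i) * fib i.+2.

Inductive letter := La | Lb.

(* fw k = f_{k-1}: fw 0 = f_{-1} = b, fw 1 = f_0 = a, f_{m+1} = f_m f_{m-1}. *)
Fixpoint fw (k : nat) : seq letter :=
  match k with
  | 0 => [:: Lb]
  | 1 => [:: La]
  | (k'.+1 as j).+1 => fw j ++ fw k'
  end.

(* The infinite Fibonacci word f = lim f_m, indexed from 1: f[n].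
   f_{n+1} = fw (n.+2) is a prefix of f of length F_{n+3} >= n. *)
Definition fword (n : nat) : letter := nth La (fw n.+2) n.-1.

Definition phi {R : realType} : R := (1 + Num.sqrt 5) / 2.

(** The defect [[t0]_F - phi [t]_F] of a binary word [t] is
    [sum_i t_i (1 - phi)^(i+2)] (indices from the right), so it lies strictly
    between [-1/phi^2] and [1/phi]. Two words with the same value [n] have
    defects differing by an integer, hence equal. If [f[n] = a], the recursion
    [f_(m+1) = f_m f_(m-1)] yields a word of value [n] ending in [1] followed by
    an even number of [0]s, whose defect is positive. With [m = 2n - n'] and
    [E] the defect, [n / phi^2 = m + E] and [n' / phi^3 = m + 2 (phi - 1) E]
    where both added terms lie in [(0, 1]], so both ceilings are [m + 1]. *)
From mathcomp Require Import all_boot all_order all_algebra.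
From mathcomp Require Import reals.
From mathcomp Require Import zify lra.
Import GRing.Theory Num.Theory.

Lemma fibSS n : fib n.+2 = fib n.+1 + fib n.
Proof. by []. Qed.

Lemma ltn_fib n : n < fib n.+2.
Proof.
elim/ltn_ind: n => [[|[|n]]] // IH.
by rewrite fibSS; have := IH n.+1 (ltnSn _); have := IH n (ltnW (ltnSn _)); lia.
Qed.

Lemma fwSS n : fw n.+2 = fw n.+1 ++ fw n.
Proof. by []. Qed.

Lemma size_fw k : size (fw k) = fib k.+1.
Proof.
elim/ltn_ind: k => [[|[|k]]] // IH.
by rewrite fwSS size_cat !IH // fibSS addnC.
Qed.

(* Little-endian: letter [i] of [s] weighs [F_(i+j)]; so [evalF z = fibval 2 (rev z)]. *)
Definition fibval (j : nat) (s : seq bool) : nat :=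
  \sum_(i < size s) nth false s i * fib (i + j).

Lemma fibval_nil j : fibval j [::] = 0.
Proof. by rewrite /fibval big_ord0. Qed.

Lemma fibval_cons j k s : fibval j (k :: s) = k * fib j + fibval j.+1 s.
Proof.
rewrite /fibval big_ord_recl; congr (_ + _).
by apply: eq_bigr => i _; rewrite addSnnS.
Qed.

Lemma fibvalSS j s : fibval j.+2 s = fibval j.+1 s + fibval j s.
Proof.
rewrite /fibval -big_split; apply: eq_bigr => i _.
by rewrite !addnS fibSS mulnDr.
Qed.

Lemma fibval_cat j s t : fibval j (s ++ t) = fibval j s + fibval (size s + j) t.
Proof.
elim: s j => [|k s IH] j; first by rewrite fibval_nil.
by rewrite cat_cons !fibval_cons IH addnA addSnnS.
Qed.

Lemma fibval_nseq_false j d t : fibval j (nseq d false ++ t) = fibval (d + j) t.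
Proof. by elim: d j => [|d IH] j //=; rewrite fibval_cons IH addSnnS. Qed.

Lemma evalF_fibval z : evalF z = fibval 2 (rev z).
Proof. by rewrite /evalF /fibval size_rev; apply: eq_bigr => i _; rewrite addn2. Qed.

Lemma evalF_rcons0 z : evalF (rcons z false) = fibval 3 (rev z).
Proof. by rewrite evalF_fibval rev_rcons fibval_cons. Qed.

(* Read most significant letter last: the word ends with [1] followed by an even number of [0]s. *)
Definition even_low_zeros (s : seq bool) : Prop :=
  exists k u, s = nseq k.*2 false ++ true :: u.

Lemma even_low_zeros_cat s t : even_low_zeros s -> even_low_zeros (s ++ t).
Proof. by move=> [k [u ->]]; exists k, (u ++ t); rewrite -catA. Qed.

Lemma fw_La_repr k m : 0 < m <= fib k.+1 -> nth La (fw k) m.-1 = La ->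
  exists s, [/\ even_low_zeros s, fibval 2 s = m & size s <= k].
Proof.
elim/ltn_ind: k m => [[|[|k]]] IH m /andP[m_gt0 m_le].
- have -> : m = 1 by apply/eqP; rewrite eqn_leq m_le.
  by [].
- have -> : m = 1 by apply/eqP; rewrite eqn_leq m_le.
  exists [:: true]; split=> //; first by exists 0, [::].
  by rewrite fibval_cons fibval_nil.
rewrite fwSS nth_cat size_fw; case: ltnP => [m_lt | m_ge] fm.
  have m_bnd : 0 < m <= fib k.+2 by lia.
  have [s [s_even s_val s_size]] := IH k.+1 (ltnSn _) m m_bnd fm.
  by exists s; split => //; lia.
have fm' : nth La (fw k) (m - fib k.+2).-1 = La.
  by rewrite (_ : (m - fib k.+2).-1 = m.-1 - fib k.+2) //; lia.
have m'_bnd : 0 < m - fib k.+2 <= fib k.+1 by rewrite fibSS in m_le; lia.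
have [s [s_even s_val s_size]] := IH k (ltnW (ltnSn _)) _ m'_bnd fm'.
exists (s ++ nseq (k - size s) false ++ [:: true]); split.
- exact: even_low_zeros_cat.
- rewrite fibval_cat fibval_nseq_false fibval_cons fibval_nil s_val.
  by rewrite (_ : k - size s + (size s + 2) = k.+2); lia.
- by rewrite !size_cat size_nseq /=; lia.
Qed.

Lemma fword_La_repr [n] : 0 < n -> fword n = La ->
  exists2 s, even_low_zeros s & fibval 2 s = n.
Proof.
move=> n_gt0 fn; have n_bnd : 0 < n <= fib n.+3 by have := ltn_fib n.+1; lia.
by have [s [s_even s_val _]] := fw_La_repr n.+2 n n_bnd fn; exists s.
Qed.

Local Open Scope ring_scope.

Lemma ceil_intrD1 (R : archiRealDomainType) (m : int) (y : R) :
  0 < y <= 1 -> Num.ceil (m%:~R + y) = m + 1.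
Proof.
by move=> /andP[y_gt0 y_le1]; apply: ceil_def; rewrite addrK intrD; apply/andP; split; lra.
Qed.

Section Defect.
Variable R : realType.

Lemma phi_sqr : (phi : R) ^+ 2 = phi + 1.
Proof.
have s_sqr := @sqr_sqrtr R 5 (ler0n _ _).
by rewrite /phi expr2 in s_sqr *; lra.
Qed.

Lemma phi_itv : 3 / 2 < (phi : R) < 2.
Proof.
have s_sqr := @sqr_sqrtr R 5 (ler0n _ _).
have s_ge0 := @sqrtr_ge0 R 5.
rewrite /phi; rewrite expr2 in s_sqr; set s := Num.sqrt 5 in s_sqr s_ge0 *.
have s_gt2 : 2 < s by nra.
have s_lt3 : s < 3 by nra.
by apply/andP; split; lra.
Qed.

Lemma phi_sqrM (x : R) : phi * (phi * x) = phi * x + x.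
Proof. by rewrite mulrA -expr2 phi_sqr mulrDl mul1r. Qed.

Lemma invf_phi2 : ((phi : R) ^+ 2)^-1 = 2 - phi.
Proof. by apply: mulr1_eq; have := phi_sqr; rewrite expr2 => phi2; nra. Qed.

Lemma invf_phi3 : ((phi : R) ^+ 3)^-1 = 2 * phi - 3.
Proof. by apply: mulr1_eq; have := phi_sqr; rewrite !exprS expr0 mulr1 => phi2; nra. Qed.

Definition err (s : seq bool) : R := (fibval 3 s)%:R - phi * (fibval 2 s)%:R.

Lemma err_nil : err [::] = 0.
Proof. by rewrite /err !fibval_nil mulr0 subr0. Qed.

Lemma err_cons (k : bool) s : err (k :: s) = k%:R * (2 - phi) + (1 - phi) * err s.
Proof.
rewrite /err !fibval_cons fibvalSS !natrD !natrM (_ : fib 3 = 2) // (_ : fib 2 = 1) //.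
by have := phi_sqrM (fibval 2 s)%:R; lra.
Qed.

Lemma err_itv s : phi - 2 < err s < phi - 1.
Proof.
have := phi_sqr; rewrite expr2 => phi2; have /andP[phi_gt phi_lt] := phi_itv.
elim: s => [|k s /andP[lo hi]]; first by rewrite err_nil; apply/andP; split; lra.
have lo' : 0 < (phi - 1) * (phi - 1 - err s) by apply: mulr_gt0; lra.
have hi' : 0 < (phi - 1) * (err s - (phi - 2)) by apply: mulr_gt0; lra.
by rewrite err_cons; case: k; rewrite /= ?(mul1r, mul0r, add0r); apply/andP; split; lra.
Qed.

Lemma err_nseq_false d s : err (nseq d false ++ s) = (1 - phi) ^+ d * err s.
Proof.
elim: d => [|d IH]; first by rewrite mul1r.
by rewrite cat_cons err_cons IH /= mul0r add0r exprS mulrA.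
Qed.

Lemma err_gt0 s : even_low_zeros s -> 0 < err s.
Proof.
have /andP[phi_gt phi_lt] := phi_itv.
move=> [k [u ->]]; rewrite err_nseq_false; apply: mulr_gt0.
  by rewrite exprn_even_gt0 ?odd_double //; apply/orP; right; apply/eqP; lra.
have /andP[_ hi] := err_itv u.
have : (phi - 1) * err u < (phi - 1) * (phi - 1) by rewrite ltr_pM2l //; lra.
by have := phi_sqr; rewrite err_cons /= mul1r expr2; lra.
Qed.

Lemma err_fibval2 [s t] : fibval 2 s = fibval 2 t -> err s = err t.
Proof.
move=> val_eq.
have /andP[lo_s hi_s] := err_itv s; have /andP[lo_t hi_t] := err_itv t.
rewrite /err val_eq in lo_s hi_s *; rewrite /err in lo_t hi_t.
suff -> : fibval 3 s = fibval 3 t by [].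
by apply/eqP; rewrite eqn_leq; apply/andP; split; rewrite -ltnS -(ltr_nat R) -natr1; lra.
Qed.

Lemma fibval2_div_phi2 t :
  (fibval 2 t)%:R / phi ^+ 2 = ((fibval 2 t).*2%:Z - (fibval 3 t)%:Z)%:~R + err t.
Proof. by rewrite invf_phi2 intrB -!pmulrn /err -mul2n natrM; lra. Qed.

Lemma fibval3_div_phi3 t :
  (fibval 3 t)%:R / phi ^+ 3 = ((fibval 2 t).*2%:Z - (fibval 3 t)%:Z)%:~R + 2 * (phi - 1) * err t.
Proof.
rewrite invf_phi3 intrB -!pmulrn /err -mul2n natrM.
by have := phi_sqrM (fibval 2 t)%:R; have := phi_sqrM 1; rewrite !mulr1; lra.
Qed.

End Defect.

Theorem proposition5 (R : realType) (z : seq bool) :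
  (1 <= evalF z)%N ->
  fword (evalF z) = La ->
  Num.ceil ((evalF z)%:R / (phi : R) ^+ 2) =
  Num.ceil ((evalF (rcons z false))%:R / (phi : R) ^+ 3).
Proof.
rewrite evalF_rcons0 evalF_fibval => n_gt0 fn.
have [s s_even s_val] := fword_La_repr n_gt0 fn.
have E_gt0 : 0 < err R (rev z) by rewrite -(err_fibval2 R s_val); exact: err_gt0.
have /andP[_ E_lt] := err_itv R (rev z).
have /andP[phi_gt phi_lt] := phi_itv R.
have E_phi : (phi - 1) * err R (rev z) < (phi - 1) * (phi - 1) by rewrite ltr_pM2l; lra.
rewrite fibval2_div_phi2 fibval3_div_phi3 !ceil_intrD1 //; apply/andP; split.
all: have := phi_sqr R; rewrite expr2; nra.
Qed.
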